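(* Let $K$, $L$, $A$ be as in the context, and suppose there is an $A$-scaffold on $L$ of tolerance $\mathfrak{T}\ge1$ with shift parameters $b_1,\dots,b_n$ (and elements $\lambda_t$, $\Psi_i$). Then $\{\Psi^{(s)}:s\in\mathbb{S}_{p^n}\}$ is a $K$-basis of $A$. Moreover, let $b'$ be any integer with $\mathfrak{a}(b')=p^n-1$ and let $\rho\in L$ with $v_L(\rho)=b'$. Then $L$ is a free $A$-module on the generator $\rho$. Additionally, for each $h\in\mathbb{Z}$, the ring $\mathfrak{A}(h,A)=\{\alpha\in A:\alpha\cdot\mathfrak{P}_L^h\subseteq\mathfrak{P}_L^h\}$ is an $\mathfrak{O}_K$-order in $A$.
   Context: Let $K$ be a field complete with respect to a discrete valuation, with residue field $\kappa$ of characteristic $p>0$ ($\kappa$ need not be perfect; $K$ may have characteristic $0$ or $p$). Let $L/K$ be a totally ramified field extension of degree $p^n$; let $v_K,v_L$ be the normalized valuations ($v_K(K^\times)=v_L(L^\times)=\mathbb{Z}$), $\mathfrak{O}_K,\mathfrak{O}_L$ the valuation rings, $\mathfrak{P}_K,\mathfrak{P}_L$ their maximal ideals. Let $A$ be a $K$-algebra with $\dim_K A=p^n$ acting $K$-linearly on $L$ (making $L$ a left $A$-module), written $\alpha\cdot x$. Let $\mathbb{S}_{p^n}=\{0,\dots,p^n-1\}$; write $s\in\mathbb{S}_{p^n}$ in base $p$ as $s=\sum_{i=1}^n s_{(n-i)}p^{n-i}$ with $s_{(n-i)}\in\{0,\dots,p-1\}$. Given integers $b_1,\dots,b_n$ prime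 to $p$ (shift parameters), put $\mathfrak{b}(s)=\sum_{i=1}^n s_{(n-i)}p^{n-i}b_i$; the map $s\mapsto\mathfrak{b}(s)\bmod p^n$ is a bijection of $\mathbb{S}_{p^n}$, and for $t\in\mathbb{Z}$ let $\mathfrak{a}(t)\in\mathbb{S}_{p^n}$ be the unique element with $\mathfrak{b}(\mathfrak{a}(t))\equiv -t\pmod{p^n}$, with base-$p$ digits $\mathfrak{a}(t)_{(n-i)}$. An $A$-scaffold on $L$ of tolerance $\mathfrak{T}\ge1$ (possibly $\mathfrak{T}=\infty$) with shift parameters $b_1,\dots,b_n$ consists of: (i) elements $\lambda_t\in L$ for $t\in\mathbb{Z}$ with $v_L(\lambda_t)=t$ and $\lambda_{t_1}\lambda_{t_2}^{-1}\in K$ whenever $t_1\equiv t_2\pmod{p^n}$; (ii) elements $\Psi_1,\dots,\Psi_n\in A$ with $\Psi_i\cdot1=0$, such that for each $i$ and each $t\in\mathbb{Z}$ there is a unit $u_{i,t}\in\mathfrak{O}_K^\times$ with $\Psi_i\cdot\lambda_t\equiv u_{i,t}\lambda_{t+p^{n-i}b_i}$ if $\mathfrak{a}(t)_{(n-i)}\ge1$ and $\Psi_i\cdot\lambda_t\equiv0$ if $\mathfrak{a}(t)_{(n-i)}=0$, congruences modulo $\lambda_{t+p^{n-i}b_i}\mathfrak{P}_L^{\mathfrak{T}}$ (equalities if $\mathfrak{T}=\infty$). For $s\in\mathbb{S}_{p^n}$, $\Psi^{(s)}=\Psi_n^{s_{(0)}}\Psi_{n-1}^{s_{(1)}}\cdots\Psi_1^{s_{(n-1)}}$.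 *)

From HB Require Import structures.
From mathcomp Require Import all_boot all_order all_algebra all_field.
Set Implicit Arguments. Unset Strict Implicit. Unset Printing Implicit Defensive.
Import Order.TTheory GRing.Theory Num.Theory.
Local Open Scope ring_scope.

Definition is_normalized_dval (F : fieldType) (v : F -> int) : Prop :=
  [/\ (forall x y : F, x != 0 -> y != 0 -> v (x * y) = v x + v y),
      (forall x y : F, x != 0 -> y != 0 -> x + y != 0 -> Num.min (v x) (v y) <= v (x + y)) &
      (forall z : int, exists2 x : F, x != 0 & v x = z)].

Definition vring (F : fieldType) (v : F -> int) (x : F) : Prop := x = 0 \/ 0 <= v x.
Definition vunit (F : fieldType) (v : F -> int) (x : F) : Prop := x != 0 /\ v x = 0.
Definition videal (F : fieldType) (v : F -> int) (h : int) (x : F) : Prop :=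
  x = 0 \/ h <= v x.

Definition v_cauchy (F : fieldType) (v : F -> int) (u : nat -> F) : Prop :=
  forall N : int, exists M : nat, forall i j : nat, (M <= i)%N -> (M <= j)%N ->
    videal v N (u i - u j).
Definition v_converges (F : fieldType) (v : F -> int) (u : nat -> F) (l : F) : Prop :=
  forall N : int, exists M : nat, forall i : nat, (M <= i)%N -> videal v N (u i - l).
Definition v_complete (F : fieldType) (v : F -> int) : Prop :=
  forall u : nat -> F, v_cauchy v u -> exists l : F, v_converges v u l.

Definition is_Kaction (K : fieldType) (L : fieldExtType K) (A : falgType K)
    (act : A -> L -> L) : Prop :=
  [/\ (forall x : L, act 1 x = x),
      (forall (a b : A) (x : L), act (a * b) x = act a (act b x)),
      (forall (a b : A) (x : L), act (a + b) x = act a x + act b x),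
      (forall (a : A) (x y : L), act a (x + y) = act a x + act a y) &
      (forall (c : K) (a : A) (x : L), act (c *: a) x = c *: act a x) /\
      (forall (c : K) (a : A) (x : L), act a (c *: x) = c *: act a x)].

Definition digit (p s j : nat) : nat := (s %/ p ^ j) %% p.

Definition bmap (p n : nat) (b : nat -> int) (s : nat) : int :=
  \sum_(1 <= i < n.+1) ((digit p s (n - i))%:Z * (p ^ (n - i))%:Z * b i).

(* a(t) : the (unique) s in S_{p^n} = {0,...,p^n-1} with b(s) = -t mod p^n *)
Definition amap (p n : nat) (b : nat -> int) (t : int) : nat :=
  nth 0%N (iota 0 (p ^ n))
    (find (fun s => ((bmap p n b s + t) %% (p ^ n)%:Z)%Z == 0) (iota 0 (p ^ n))).

(* congruence x = y mod lambda_m P_L^T, i.e. v_L(x - y) >= m + T; T = None means T = oo *)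
Definition tcong (K : fieldType) (L : fieldExtType K) (vL : L -> int)
    (T : option nat) (m : int) (x y : L) : Prop :=
  match T with
  | None => x = y
  | Some T => videal vL (m + T%:Z) (x - y)
  end.

Definition is_scaffold (K : fieldType) (L : fieldExtType K) (A : falgType K)
    (vK : K -> int) (vL : L -> int) (act : A -> L -> L) (p n : nat)
    (T : option nat) (b : nat -> int) (lam : int -> L) (Psi : nat -> A) : Prop :=
  [/\
      (match T with None => True | Some T => (1 <= T)%N end),
      (forall i, (1 <= i <= n)%N -> ~~ (p%:Z %| b i)%Z),
      (forall t : int, lam t != 0 /\ vL (lam t) = t),
      (forall t1 t2 : int, (t1 == t2 %[mod (p ^ n)%:Z])%Z ->
          exists c : K, lam t1 / lam t2 = c%:A) &
      (forall i, (1 <= i <= n)%N -> act (Psi i) 1 = 0) /\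
      (forall i, (1 <= i <= n)%N -> forall t : int,
          exists u : K, vunit vK u /\
            let m := t + (p ^ (n - i))%:Z * b i in
            if (1 <= digit p (amap p n b t) (n - i))%N
            then tcong vL T m (act (Psi i) (lam t)) (u *: lam m)
            else tcong vL T m (act (Psi i) (lam t)) 0)].

Definition Psi_pow (K : fieldType) (A : falgType K) (p n : nat) (Psi : nat -> A) (s : nat) : A :=
  \prod_(0 <= j < n) Psi (n - j)%N ^+ digit p s j.

Definition assoc_order (K : fieldType) (L : fieldExtType K) (A : falgType K)
    (vL : L -> int) (act : A -> L -> L) (h : int) (alpha : A) : Prop :=
  forall x : L, videal vL h x -> videal vL h (act alpha x).

Definition is_OK_order (K : fieldType) (A : falgType K) (vK : K -> int)
    (S : A -> Prop) : Prop :=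
  [/\ S 1, S 0,
      (forall x y, S x -> S y -> S (x + y)),
      (forall x y, S x -> S y -> S (x * y)) &
      (forall (c : K) x, vring vK c -> S x -> S (c *: x)) /\
      exists gens : seq A,
        (<<gens>>%VS = fullv) /\
        (forall x, S x <-> exists c : nat -> K,
             (forall i, vring vK (c i)) /\
             x = \sum_(i < size gens) c i *: gens`_i)].

From HB Require Import structures.
From Stdlib Require Import Classical Wf_nat.
From mathcomp Require Import all_boot all_order all_algebra all_field zify ring.
Set Implicit Arguments. Unset Strict Implicit. Unset Printing Implicit Defensive.
Import Order.TTheory GRing.Theory Num.Theory.
Local Open Scope ring_scope.

(* Let [rho] have valuation [b'] with [a(b') = p^n - 1], so that every base-[p]
   digit of [a(vL rho)] equals [p - 1]. Applying [Psi_i] to an element whose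
   [a]-digit at position [n - i] is nonzero shifts its valuation by exactly
   [p^(n-i) b_i] and lowers that digit by one; hence [Psi^(s) . rho] has
   valuation [b' + b(s)]. As [b] is injective modulo [p^n], these [p^n]
   valuations are pairwise incongruent modulo [e = p^n], so no [K]-linear
   combination of the [Psi^(s) . rho] can cancel: they are free, and counting
   dimensions makes [Psi^(s)] a basis of [A] and [alpha |-> alpha . rho] a
   bijection. The same non-cancellation bounds from below the coordinates of
   any element of [A(h, A)], while [Psi^(s)] maps [P_L^h] into
   [P_L^(h + b(s))], so a nonzero multiple of each [Psi^(s)] lies in
   [A(h, A)]; an [O_K]-submodule with coordinates bounded below is finitely
   generated since [O_K] is a discrete valuation ring. *)

Section DiscreteValuation.
Variables (F : fieldType) (v : F -> int).
Hypothesis Hv : is_normalized_dval v.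

Lemma dvalM x y : x != 0 -> y != 0 -> v (x * y) = v x + v y.
Proof. by case: Hv => + _ _; apply. Qed.

Lemma dvalD x y : x != 0 -> y != 0 -> x + y != 0 -> Num.min (v x) (v y) <= v (x + y).
Proof. by case: Hv => _ + _; apply. Qed.

Lemma dval1 : v 1 = 0.
Proof.
have := dvalM (oner_neq0 F) (oner_neq0 F); rewrite mulr1 => h.
by change (v 1 = v 1 + v 1) in h; lia.
Qed.

Lemma dvalN x : x != 0 -> v (- x) = v x.
Proof.
move=> x0; have N10 : (-1 : F) != 0 by rewrite oppr_eq0 oner_neq0.
have vN1 : v (-1) = 0 by have := dvalM N10 N10; rewrite mulrNN mulr1 dval1; lia.
by rewrite -mulN1r dvalM // vN1 add0r.
Qed.

Lemma dvalV x : x != 0 -> v x^-1 = - v x.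
Proof.
move=> x0; have := dvalM x0 (invr_neq0 x0).
by rewrite mulfV // dval1; lia.
Qed.

Lemma dvalX x m : x != 0 -> v (x ^+ m) = m%:Z * v x.
Proof.
move=> x0; elim: m => [|m IH]; first by rewrite expr0 dval1 mul0r.
by rewrite exprS dvalM ?expf_neq0 // IH -addn1 PoszD mulrDl mul1r addrC.
Qed.

Lemma videalW h h' x : h' <= h -> videal v h x -> videal v h' x.
Proof. by move=> hh [->|hx]; [left | right; lia]. Qed.

Lemma videalD h x y : videal v h x -> videal v h y -> videal v h (x + y).
Proof.
case=> [->|hx]; first by rewrite add0r.
case=> [->|hy]; first by rewrite addr0; right.
have [->|xy] := eqVneq (x + y) 0; first by left.
have [x0|x0] := eqVneq x 0; first by rewrite x0 add0r; right.
have [y0|y0] := eqVneq y 0; first by rewrite y0 addr0; right.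
by right; have := dvalD x0 y0 xy; set a := v (x + y); lia.
Qed.

Lemma videalN h x : videal v h x -> videal v h (- x).
Proof.
case=> [->|hx]; first by rewrite oppr0; left.
have [->|x0] := eqVneq x 0; first by rewrite oppr0; left.
by right; rewrite dvalN.
Qed.

Lemma videal_sum h m (G : 'I_m -> F) :
  (forall i, videal v h (G i)) -> videal v h (\sum_(i < m) G i).
Proof. by move=> hG; elim/big_rec: _ => [|i x _]; [left | apply: videalD]. Qed.

Lemma vringN c : vring v c -> vring v (- c).
Proof. exact: videalN. Qed.

Lemma dvalD_eq x y : x != 0 -> videal v (v x + 1) y -> x + y != 0 /\ v (x + y) = v x.
Proof.
move=> x0 [->|hy]; first by rewrite addr0.
have [y0|y0] := eqVneq y 0; first by rewrite y0 addr0.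
have xy : x + y != 0.
  by apply: contraTneq hy => /eqP; rewrite addr_eq0 => /eqP ->; rewrite dvalN //; lia.
split=> //; have := dvalD x0 y0 xy.
have ny0 : - y != 0 by rewrite oppr_eq0.
have := dvalD xy ny0; rewrite addrK dvalN // => /(_ x0).
by move: hy; set a := v (x + y); lia.
Qed.

Lemma dvalD_lt x y : x != 0 -> v x < v y -> x + y != 0 /\ v (x + y) = v x.
Proof.
move=> x0 lt; apply: dvalD_eq => //.
by have [->|y0] := eqVneq y 0; [left | right; lia].
Qed.

Section DistinctValuations.
Variables (m : nat) (G : nat -> F).
Hypothesis Gdist : forall i j, (i < m)%N -> (j < m)%N -> i != j ->
  G i != 0 -> G j != 0 -> v (G i) != v (G j).

Lemma dval_sum_distinct_nat :
  [/\ \sum_(i < m) G i = 0 -> forall i, (i < m)%N -> G i = 0,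
      \sum_(i < m) G i != 0 -> exists2 i, (i < m)%N & G i != 0 /\ v (G i) = v (\sum_(i < m) G i) &
      \sum_(i < m) G i != 0 -> forall j, (j < m)%N -> G j != 0 -> v (\sum_(i < m) G i) <= v (G j)].
Proof.
elim: m Gdist => [|k IH] hd.
  by split; [move=> _ i | rewrite big_ord0 eqxx | rewrite big_ord0 eqxx].
have [|Ia Ib Ic] := IH; first by move=> i j hi hj; apply: hd; apply: ltnW.
rewrite big_ord_recr /=; set S := \sum_(i < k) G i.
have ltSP j : (j < k.+1)%N -> j = k \/ (j < k)%N by rewrite ltnS leq_eqVlt => /orP [/eqP|]; auto.
have [Gk0|Gk0] := eqVneq (G k) 0.
  rewrite Gk0 addr0; split.
  - by move=> S0 i /ltSP [->|]; [|exact: Ia].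
  - by move=> S0; have [i hi hh] := Ib S0; exists i => //; apply: ltnW.
  - by move=> S0 j /ltSP [->|]; [rewrite Gk0 eqxx | exact: Ic].
have [S0|S0] := eqVneq S 0.
  rewrite S0 add0r; split => [e | _ | _ j /ltSP [->|hj]] //; first by rewrite e eqxx in Gk0.
  - by exists k.
  - by rewrite Ia ?eqxx.
have [i0 hi0 [Gi0 vi0]] := Ib S0.
have ne : v S != v (G k) by rewrite -vi0 hd // ?ltn_eqF // ltnW.
have [lt|gt] := ltP (v S) (v (G k)).
  have [nz ev] := dvalD_lt S0 lt; split => [e | _ | _ j /ltSP [->|hj] Gj]; rewrite ?ev.
  - by rewrite e eqxx in nz.
  - by exists i0; [exact: ltnW |].
  - exact: ltW.
  - exact: Ic.
have lt : v (G k) < v S by rewrite lt_neqAle eq_sym ne gt.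
have [nz ev] := dvalD_lt Gk0 lt; rewrite addrC.
split => [e | _ | _ j /ltSP [->|hj] Gj]; rewrite ?ev //.
- by rewrite e eqxx in nz.
- by exists k.
- by have := Ic S0 j hj Gj; move: lt; set a := v S; set c := v (G j); lia.
Qed.
End DistinctValuations.

Lemma dval_sum_distinct m (G : 'I_m -> F) :
  (forall i j : 'I_m, i != j -> G i != 0 -> G j != 0 -> v (G i) != v (G j)) ->
  [/\ \sum_(i < m) G i = 0 -> forall i, G i = 0,
      \sum_(i < m) G i != 0 -> exists i, G i != 0 /\ v (G i) = v (\sum_(i < m) G i) &
      \sum_(i < m) G i != 0 -> forall j, G j != 0 -> v (\sum_(i < m) G i) <= v (G j)].
Proof.
move=> hd; pose G' j := if insub j is Some i then G i else 0.
have G'E (i : 'I_m) : G' i = G i by rewrite /G' valK.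
have [|Ia Ib Ic] := @dval_sum_distinct_nat m G'.
  move=> i j hi hj ij; rewrite -[i]/(val (Ordinal hi)) -[j]/(val (Ordinal hj)) !G'E.
  by apply: hd; apply: contra_neq ij => /(congr1 val).
have eS : \sum_(i < m) G' i = \sum_(i < m) G i by apply: eq_bigr => i _; rewrite G'E.
rewrite eS in Ia Ib Ic; split.
- by move=> S0 i; rewrite -G'E Ia.
- by move=> /Ib [i hi]; rewrite -[i]/(val (Ordinal hi)) G'E => h; exists (Ordinal hi).
- by move=> S0 j; rewrite -G'E; apply: Ic.
Qed.
End DiscreteValuation.

Section Digits.
Variable p : nat.
Hypothesis p_gt1 : (1 < p)%N.

Definition undigits (m : nat) (d : nat -> nat) : nat := (\sum_(j < m) d j * p ^ j)%N.

Lemma undigitsS m d : undigits m.+1 d = (undigits m d + d m * p ^ m)%N.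
Proof. by rewrite /undigits big_ord_recr. Qed.

Lemma digit_lt s j : (digit p s j < p)%N.
Proof. by rewrite /digit ltn_mod ltnW. Qed.

Lemma undigits_lt m d : (forall j, d j < p)%N -> (undigits m d < p ^ m)%N.
Proof.
move=> hd; elim: m => [|m IH]; first by rewrite /undigits big_ord0 expn0.
by rewrite undigitsS expnS; have := hd m; move: IH; set q := (p ^ m)%N; nia.
Qed.

Lemma digit_undigits m d k : (forall j, d j < p)%N -> (k < m)%N ->
  digit p (undigits m d) k = d k.
Proof.
move=> hd; elim: m => [//|m IH]; rewrite ltnS leq_eqVlt => /orP [/eqP ->|hk].
  rewrite undigitsS /digit addnC divnMDl ?expn_gt0 ?(ltnW p_gt1) //.
  by rewrite divn_small ?undigits_lt // addn0 modn_small.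
rewrite undigitsS /digit.
have -> : (d m * p ^ m = (d m * p ^ (m - k).-1 * p) * p ^ k)%N.
  have e : (p ^ m = p ^ (m - k).-1 * p * p ^ k)%N.
    by rewrite -expnSr prednK ?subn_gt0 // -expnD subnK // ltnW.
  by rewrite e !mulnA.
by rewrite addnC divnMDl ?expn_gt0 ?(ltnW p_gt1) // modnMDl; apply: IH.
Qed.

Lemma modn_undigits s m : (s %% p ^ m)%N = undigits m (digit p s).
Proof.
elim: m => [|m IH]; first by rewrite expn0 modn1 /undigits big_ord0.
rewrite undigitsS -IH /digit.
set Q := (s %/ p ^ m)%N; set r := (s %% p ^ m)%N.
have -> : s = ((Q %/ p) * p ^ m.+1 + ((Q %% p) * p ^ m + r))%N.
  by rewrite {1}(divn_eq s (p ^ m)) -/Q -/r {1}(divn_eq Q p) expnS; ring.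
rewrite modnMDl modn_small; first by rewrite addnC.
have := digit_lt s m; rewrite /digit -/Q.
have : (r < p ^ m)%N by rewrite ltn_mod expn_gt0 ltnW.
by rewrite expnS; set a := (Q %% p)%N; set q := (p ^ m)%N; nia.
Qed.

Lemma undigitsK s m : (s < p ^ m)%N -> undigits m (digit p s) = s.
Proof. by move=> hs; rewrite -modn_undigits modn_small. Qed.

Lemma eq_from_digits m s s' : (s < p ^ m)%N -> (s' < p ^ m)%N ->
  (forall j, (j < m)%N -> digit p s j = digit p s' j) -> s = s'.
Proof.
move=> hs hs' he; rewrite -(undigitsK hs) -(undigitsK hs').
by apply: eq_bigr => j _; rewrite he.
Qed.

Lemma digit_exp_pred m j : (j < m)%N -> digit p (p ^ m).-1 j = p.-1.
Proof.
have undigits_pred : undigits m (fun _ => p.-1) = (p ^ m).-1.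
  elim: m {j} => [|m IH]; first by rewrite /undigits big_ord0 expn0.
  rewrite undigitsS IH expnS; have : (0 < p ^ m)%N by rewrite expn_gt0 ltnW.
  by move: p_gt1; set q := (p ^ m)%N; nia.
by move=> hj; rewrite -undigits_pred digit_undigits // => _; lia.
Qed.

Variables (n : nat) (b : nat -> int).

Definition bmap_digits (d : nat -> nat) : int :=
  \sum_(j < n) (d j)%:Z * (p ^ j)%:Z * b (n - j)%N.

Lemma bmapE s : bmap p n b s = bmap_digits (digit p s).
Proof.
rewrite /bmap big_rev_mkord subn1 /= /bmap_digits; apply: eq_bigr => i _.
by rewrite subSS subKn // ltnW.
Qed.

End Digits.

Section ShiftMap.
Variables (p n : nat) (b : nat -> int).
Hypothesis p_prime : prime p.
Hypothesis b_coprime : forall i, (1 <= i <= n)%N -> ~~ (p%:Z %| b i)%Z.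

Let p_gt1 : (1 < p)%N := prime_gt1 p_prime.
Local Notation N := (p ^ n)%N.

Lemma expn_n_gt0 : (0 < N)%N.
Proof. by rewrite expn_gt0 prime_gt0. Qed.

(* Reduction modulo [p^(m+1)] peels off the digit of weight [p^m], whose
   coefficient [b (n - m)] is a unit at [p]. *)
Lemma eq_digits_of_dvd m (d d' : nat -> nat) : (m <= n)%N ->
  (forall j, d j < p)%N -> (forall j, d' j < p)%N ->
  ((p ^ m)%:Z %| \sum_(j < m) ((d j)%:Z - (d' j)%:Z) * (p ^ j)%:Z * b (n - j)%N)%Z ->
  forall j, (j < m)%N -> d j = d' j.
Proof.
move=> + hd hd'; elim: m => [//|m IH] hm.
rewrite big_ord_recr /=; set S := \sum_(j < m) _; set c := (d m)%:Z - (d' m)%:Z.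
have hY : ((p ^ m)%:Z %| c * (p ^ m)%:Z * b (n - m)%N)%Z.
  by rewrite -mulrA mulrC; apply: dvdz_mulr; apply: dvdz_mulr.
have hpm : ((p ^ m)%:Z %| (p ^ m.+1)%:Z)%Z by rewrite expnS PoszM dvdz_mull.
move=> H.
have IH' : forall j, (j < m)%N -> d j = d' j.
  by apply: IH (ltnW hm) _; have := dvdz_trans hpm H; rewrite (rpredDr _ hY).
have S0 : S = 0 by rewrite /S big1 // => j _; rewrite IH' // subrr !mul0r.
move: H; rewrite S0 add0r (_ : c * _ * _ = (c * b (n - m)%N) * (p ^ m)%:Z) ?expnS ?PoszM; last by ring.
have pm0 : (0 < p ^ m)%N by rewrite expn_gt0 prime_gt0.
rewrite dvdz_mul2r; last by move: pm0; lia.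
rewrite unfold_in /= abszM Euclid_dvdM // => /orP [hc|hbm]; last first.
  have := b_coprime (i := (n - m)%N); rewrite subn_gt0 hm leq_subr => /(_ isT).
  by rewrite unfold_in /= hbm.
move=> j; rewrite ltnS leq_eqVlt => /orP [/eqP ->|]; last exact: IH'.
have : `|c|%N == 0%N.
  apply/negPn/negP => nz; have := dvdn_leq (_ : 0 < `|c|)%N hc; rewrite ?lt0n // => h.
  by have := hd m; have := hd' m; rewrite /c; move: nz; lia.
by rewrite absz_eq0 /c subr_eq0 => /eqP [].
Qed.

Lemma bmap_inj s s' : (s < N)%N -> (s' < N)%N ->
  (N%:Z %| bmap p n b s - bmap p n b s')%Z -> s = s'.
Proof.
move=> hs hs' H; apply: (eq_from_digits p_gt1 hs hs').
apply: (@eq_digits_of_dvd n) => //; try exact: digit_lt.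
by move: H; rewrite !bmapE /bmap_digits -sumrB; under eq_bigr do rewrite -!mulrBl.
Qed.

(* [b] is injective modulo [N] on [S_N], hence surjective onto [Z/N]. *)
Lemma amap_exists t : exists2 s, (s < N)%N & (N%:Z %| bmap p n b s + t)%Z.
Proof.
have Nz : N%:Z != 0 by have := expn_n_gt0; lia.
have Np : 0 < N%:Z by have := expn_n_gt0; lia.
have hlt (z : int) : (`|(z %% N%:Z)%Z| < N)%N.
  by have := modz_ge0 z Nz; have := ltz_pmod z Np; lia.
pose f (s : 'I_N) : 'I_N := Ordinal (hlt (bmap p n b s)).
have finj : injective f.
  move=> s s' /(congr1 val) /= e; apply: val_inj => /=; apply: bmap_inj => //.
  rewrite -eqz_mod_dvd; apply/eqP.
  by have := modz_ge0 (bmap p n b s) Nz; have := modz_ge0 (bmap p n b s') Nz; move: e; lia.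
have [g fg gf] := injF_bij finj.
exists (g (Ordinal (hlt (- t)))) => //.
have /(congr1 val) /= e := gf (Ordinal (hlt (- t))).
rewrite -[X in _ + X]opprK -eqz_mod_dvd; apply/eqP.
have := modz_ge0 (bmap p n b (g (Ordinal (hlt (- t))))) Nz.
by have := modz_ge0 (- t) Nz; move: e; lia.
Qed.

Lemma amap_spec t : (amap p n b t < N)%N /\ (N%:Z %| bmap p n b (amap p n b t) + t)%Z.
Proof.
have [s hs hd] := amap_exists t.
set P := fun s => ((bmap p n b s + t) %% N%:Z)%Z == 0.
have hP : has P (iota 0 N).
  by apply/hasP; exists s; [rewrite mem_iota | apply/eqP/dvdz_mod0P].
have hf := hP; rewrite has_find size_iota in hf.
have e : amap p n b t = find P (iota 0 N) by rewrite /amap nth_iota.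
split; first by rewrite e.
by have /eqP /dvdz_mod0P := nth_find 0%N hP.
Qed.

Lemma amap_uniq t s : (s < N)%N -> (N%:Z %| bmap p n b s + t)%Z -> amap p n b t = s.
Proof.
move=> hs hd; have [ha hd'] := amap_spec t; apply: bmap_inj => //.
have -> : bmap p n b (amap p n b t) - bmap p n b s =
    (bmap p n b (amap p n b t) + t) - (bmap p n b s + t) by ring.
exact: rpredB.
Qed.

Lemma amap_bmap s : (s < N)%N -> amap p n b (- bmap p n b s) = s.
Proof. by move=> hs; apply: amap_uniq; rewrite ?subrr. Qed.

Lemma amapDM t z : amap p n b (t + N%:Z * z) = amap p n b t.
Proof.
have [h1 h2] := amap_spec t; apply: amap_uniq => //.
by rewrite addrA rpredD // dvdz_mulr.
Qed.

Lemma digit_amapD t k : (k < n)%N -> (1 <= digit p (amap p n b t) k)%N ->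
  forall j, (j < n)%N ->
  digit p (amap p n b (t + (p ^ k)%:Z * b (n - k)%N)) j = (digit p (amap p n b t) j - (j == k))%N.
Proof.
move=> hk h1; set d := digit p (amap p n b t).
pose d' j := (d j - (j == k))%N.
have hd' j : (d' j < p)%N by have := digit_lt p_gt1 (amap p n b t) j; rewrite /d' -/d; lia.
set s' := undigits p n d'.
have hdig j : (j < n)%N -> digit p s' j = d' j by move=> hj; apply: digit_undigits.
suff -> : amap p n b (t + (p ^ k)%:Z * b (n - k)%N) = s' by [].
apply: amap_uniq; first exact: undigits_lt.
have eb : bmap p n b s' = bmap_digits p n b d - (p ^ k)%:Z * b (n - k)%N.
  rewrite bmapE /bmap_digits.
  rewrite (eq_bigr (fun j : 'I_n => (d j)%:Z * (p ^ j)%:Z * b (n - j)%N -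
                   ((j : nat) == k)%:Z * (p ^ j)%:Z * b (n - j)%N)); last first.
    move=> j _; rewrite hdig // /d' -!mulrBl; congr (_ * _ * _).
    case: eqP => [ej|]; last by rewrite subn0 subr0.
    by move: h1; rewrite -ej -/d; lia.
  rewrite sumrB; congr (_ - _).
  rewrite (bigD1 (Ordinal hk)) //= eqxx mul1r big1 ?addr0 // => j /negP hj.
  by case: eqP => [ej|]; [case: hj; apply/eqP/val_inj | rewrite !mul0r].
rewrite eb (_ : _ + _ = bmap p n b (amap p n b t) + t); first by case: (amap_spec t).
by rewrite bmapE; ring.
Qed.

End ShiftMap.

Section VringSpan.
Variables (K : fieldType) (vK : K -> int).
Hypothesis HvK : is_normalized_dval vK.
Variable V : lmodType K.

Definition vring_submod (S : V -> Prop) : Prop :=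
  [/\ S 0, forall x y, S x -> S y -> S (x + y) &
      forall c x, vring vK c -> S x -> S (c *: x)].

Definition vring_spanned (gens : seq V) (S : V -> Prop) : Prop :=
  forall x, S x <-> exists c : nat -> K,
    (forall i, vring vK (c i)) /\ x = \sum_(i < size gens) c i *: gens`_i.

(* Among values of [f] on [S] whose valuations are bounded below, one of least
   valuation divides all the others in [O_K]; if [f] vanishes on [S], take [0]. *)
Lemma exists_min_coord (S : V -> Prop) (f : V -> K) (B : int) : S 0 ->
  (forall x, S x -> f x = 0 \/ - B <= vK (f x)) ->
  exists2 x0, S x0 & forall x, S x -> exists2 c, vring vK c & f x = c * f x0.
Proof.
move=> S0 hB.
case: (classic (exists x, S x /\ f x != 0)) => [[x1 [Sx1 fx1]]|nex]; last first.
  exists 0 => // x Sx; exists 0; first by left.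
  by rewrite mul0r; apply/eqP/negPn/negP => fx; apply: nex; exists x.
pose depth x := absz (vK (f x) + B).
pose P k := exists x, [/\ S x, f x != 0 & depth x = k].
have [k0 [[[x0 [Sx0 fx0 <-]] kmin] _]] := @dec_inh_nat_subset_has_unique_least_element P
  (fun k => classic (P k)) (ex_intro P _ (ex_intro _ x1 (And3 Sx1 fx1 erefl))).
exists x0 => // x Sx.
have [fx|fx] := eqVneq (f x) 0; first by exists 0; [left | rewrite fx mul0r].
exists (f x / f x0); last by rewrite divfK.
have hle := kmin (depth x) (ex_intro _ x (And3 Sx fx erefl)).
have [e|h0] := hB x0 Sx0; first by rewrite e eqxx in fx0.
have [e|h1] := hB x Sx; first by rewrite e eqxx in fx.
right; rewrite (dvalM HvK) ?invr_eq0 // (dvalV HvK) //.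
by move: hle h0 h1; rewrite /depth; set a := vK (f x0); set c := vK (f x); lia.
Qed.

Lemma vring_spanned_cons (S : V -> Prop) (f : V -> K) x0 gens :
  vring_submod S -> S x0 ->
  (forall x, S x -> exists2 c, vring vK c & f x = c * f x0) ->
  (forall c x, f (c *: x) = c * f x) -> (forall x y, f (x + y) = f x + f y) ->
  vring_spanned gens (fun x => S x /\ f x = 0) -> vring_spanned (x0 :: gens) S.
Proof.
move=> [S0 SD SZ] Sx0 hmin fZ fD Hg x; split.
  move=> Sx; have [d hd fxd] := hmin x Sx.
  have [|c' [hc' ex']] := (Hg (x + (- d) *: x0)).1.
    split; last by rewrite fD fZ fxd mulNr subrr.
    by apply: SD => //; apply: SZ => //; apply: vringN.
  exists (fun i => if i is i'.+1 then c' i' else d); split; first by case.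
  by rewrite /= big_ord_recl /= -ex' addrCA scaleNr subrr addr0.
case=> c [hc ->]; rewrite /= big_ord_recl /=.
apply: SD; first exact: SZ.
have [] // := (Hg (\sum_(i < size gens) c (bump 0 i) *: gens`_i)).2.
by exists (fun i => c i.+1).
Qed.

Lemma vring_spanned_of_bounded_coords (r : nat) (f : nat -> V -> K) (B : nat -> int)
    (S : V -> Prop) :
  vring_submod S ->
  (forall i c x, f i (c *: x) = c * f i x) ->
  (forall i x y, f i (x + y) = f i x + f i y) ->
  (forall x, S x -> forall i, (i < r)%N -> f i x = 0 \/ - B i <= vK (f i x)) ->
  (forall x, S x -> (forall i, (i < r)%N -> f i x = 0) -> x = 0) ->
  exists gens : seq V, vring_spanned gens S.
Proof.
move=> + fZ fD; elim: r S => [|r IH] S SS Sb Ssep.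
  exists [::] => x; split.
    by move=> Sx; exists (fun _ => 0); split; [left | rewrite big_ord0; apply: Ssep].
  by case: SS => S0 _ _ [c [_ ->]]; rewrite big_ord0.
have [S0 SD SZ] := SS.
have f0 : f r 0 = 0 by rewrite -(scale0r 0) fZ mul0r.
have [x0 Sx0 hmin] := @exists_min_coord S (f r) (B r) S0 (fun x Sx => Sb x Sx r (ltnSn r)).
have [|||gens' Hg'] := IH (fun x => S x /\ f r x = 0).
- split=> [| x y [Sx fx] [Sy fy] | c x hc [Sx fx]] //.
    by split; [apply: SD | rewrite fD fx fy addr0].
  by split; [apply: SZ | rewrite fZ fx mulr0].
- by move=> x [Sx _] i hi; apply: Sb => //; apply: ltnW.
- move=> x [Sx fx] h; apply: Ssep => // i; rewrite ltnS leq_eqVlt => /orP [/eqP ->|] //.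
  exact: h.
by exists (x0 :: gens'); apply: (vring_spanned_cons SS Sx0 hmin (fZ r) (fD r)).
Qed.

End VringSpan.

Section KAction.
Variables (K : fieldType) (L : fieldExtType K) (A : falgType K) (act : A -> L -> L).
Hypothesis Hact : is_Kaction act.

Lemma act1 x : act 1 x = x. Proof. by case: Hact. Qed.
Lemma actM a c x : act (a * c) x = act a (act c x). Proof. by case: Hact. Qed.
Lemma actDl a c x : act (a + c) x = act a x + act c x. Proof. by case: Hact. Qed.
Lemma actDr a x y : act a (x + y) = act a x + act a y. Proof. by case: Hact. Qed.
Lemma actZl c a x : act (c *: a) x = c *: act a x. Proof. by case: Hact => _ _ _ _ []. Qed.
Lemma actZr c a x : act a (c *: x) = c *: act a x. Proof. by case: Hact => _ _ _ _ []. Qed.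

Lemma act0l x : act 0 x = 0.
Proof. by apply: (addrI (act 0 x)); rewrite -actDl !addr0. Qed.

Lemma act0r a : act a 0 = 0.
Proof. by apply: (addrI (act a 0)); rewrite -actDr !addr0. Qed.

Lemma actBl a c x : act (a - c) x = act a x - act c x.
Proof. by rewrite actDl -scaleN1r actZl scaleN1r. Qed.

Lemma act_suml m (c : 'I_m -> K) (a : 'I_m -> A) x :
  act (\sum_(i < m) c i *: a i) x = \sum_(i < m) c i *: act (a i) x.
Proof. by elim/big_rec2: _ => [|i y z _ <-]; rewrite ?act0l // actDl actZl. Qed.

Lemma act_sumr m (c : 'I_m -> K) (y : 'I_m -> L) a :
  act a (\sum_(i < m) c i *: y i) = \sum_(i < m) c i *: act a (y i).
Proof. by elim/big_rec2: _ => [|i z w _ <-]; rewrite ?act0r // actDr actZr. Qed.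

End KAction.

Section ValuedExtension.
Variables (K : fieldType) (L : fieldExtType K) (vK : K -> int) (vL : L -> int) (e : nat).
Hypothesis HvL : is_normalized_dval vL.
Hypothesis dvalL_scalar : forall c : K, c != 0 -> vL c%:A = e%:Z * vK c.

Lemma dvalZ (c : K) (x : L) : c != 0 -> x != 0 ->
  c *: x != 0 /\ vL (c *: x) = e%:Z * vK c + vL x.
Proof.
move=> c0 x0; have cA0 : c%:A != 0 :> L by rewrite scaler_eq0 negb_or c0 oner_neq0.
by rewrite -mulr_algl mulf_neq0 // (dvalM HvL) // dvalL_scalar.
Qed.

Lemma videalZ h (c : K) (x : L) : c != 0 -> videal vL h x ->
  videal vL (h + e%:Z * vK c) (c *: x).
Proof.
move=> c0 [->|hx]; first by rewrite scaler0; left.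
have [x0|x0] := eqVneq x 0; first by rewrite x0 scaler0; left.
by right; have [_ ->] := dvalZ c0 x0; move: hx; set a := vL x; lia.
Qed.

Lemma videalZ_vring h (c : K) (x : L) : vring vK c -> videal vL h x -> videal vL h (c *: x).
Proof.
move=> [->|hc] hx; first by rewrite scale0r; left.
have [c0|c0] := eqVneq c 0; first by rewrite c0 scale0r; left.
by apply: (videalW _ (videalZ c0 hx)); move: hc; set z := vK c; nia.
Qed.

Section FamilyDistinctMod.
Variables (m : nat) (w : 'I_m -> L).
Hypothesis w_neq0 : forall i, w i != 0.
Hypothesis w_dist : forall i j, (e%:Z %| vL (w i) - vL (w j))%Z -> i = j.

(* Scalars from [K] shift valuations by multiples of [e], so terms built on
   vectors whose valuations are distinct mod [e] never cancel. *)
Lemma dvalZ_family_distinct (c : 'I_m -> K) (i j : 'I_m) : i != j ->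
  c i *: w i != 0 -> c j *: w j != 0 -> vL (c i *: w i) != vL (c j *: w j).
Proof.
move=> ij hi hj.
have ci : c i != 0 by apply: contraNneq hi => ->; rewrite scale0r.
have cj : c j != 0 by apply: contraNneq hj => ->; rewrite scale0r.
have [_ ->] := dvalZ ci (w_neq0 i); have [_ ->] := dvalZ cj (w_neq0 j).
apply: contra_neq ij => eq_v; apply: w_dist.
have -> : vL (w i) - vL (w j) = e%:Z * (vK (c j) - vK (c i)).
  by rewrite mulrBr; move: eq_v; lia.
exact: dvdz_mulr.
Qed.

Lemma family_free (c : 'I_m -> K) : \sum_(i < m) c i *: w i = 0 -> forall i, c i = 0.
Proof.
move=> H i; have [Ia _ _] := dval_sum_distinct HvL (@dvalZ_family_distinct c).
by have /eqP := Ia H i; rewrite scaler_eq0 (negbTE (w_neq0 i)) orbF => /eqP.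
Qed.

Lemma family_coord_bound (c : 'I_m -> K) h : videal vL h (\sum_(i < m) c i *: w i) ->
  forall i, c i = 0 \/ h <= e%:Z * vK (c i) + vL (w i).
Proof.
move=> H i; have [Ia _ Ic] := dval_sum_distinct HvL (@dvalZ_family_distinct c).
have [ci|ci] := eqVneq (c i) 0; [by left | right].
have [Gi vGi] := dvalZ ci (w_neq0 i); rewrite -vGi.
have [S0|S0] := eqVneq (\sum_(i < m) c i *: w i) 0; first by rewrite (Ia S0 i) eqxx in Gi.
case: H => [H|H]; first by rewrite H eqxx in S0.
by have := Ic S0 i Gi; move: H; set a := vL (\sum_(i < m) _); lia.
Qed.

Lemma family_leading (c : 'I_m -> K) : \sum_(i < m) c i *: w i != 0 ->
  exists i, [/\ c i != 0, vL (c i *: w i) = vL (\sum_(i < m) c i *: w i) &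
    forall j, j != i -> videal vL (vL (\sum_(i < m) c i *: w i) + 1) (c j *: w j)].
Proof.
move=> S0; have [_ Ib Ic] := dval_sum_distinct HvL (@dvalZ_family_distinct c).
have [i [Gi vGi]] := Ib S0; exists i; split => //.
  by apply: contraNneq Gi => ->; rewrite scale0r.
move=> j ji; have [Gj|Gj] := eqVneq (c j *: w j) 0; [by left | right].
have := dvalZ_family_distinct ji Gj Gi; have := Ic S0 j Gj.
by rewrite -vGi; set a := vL (c i *: w i); set z := vL (c j *: w j); lia.
Qed.

End FamilyDistinctMod.
End ValuedExtension.

Section Scaffold.
Variables (p n : nat) (K : fieldType) (L : fieldExtType K) (A : falgType K)
  (vK : K -> int) (vL : L -> int) (act : A -> L -> L)
  (T : option nat) (b : nat -> int) (lam : int -> L) (Psi : nat -> A).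
Hypothesis p_prime : prime p.
Hypothesis HvK : is_normalized_dval vK.
Hypothesis HvL : is_normalized_dval vL.
Hypothesis dimL : \dim {:L} = (p ^ n)%N.
Hypothesis dvalL_scalar : forall c : K, c != 0 -> vL c%:A = (p ^ n)%:Z * vK c.
Hypothesis dimA : \dim {:A} = (p ^ n)%N.
Hypothesis Hact : is_Kaction act.
Hypothesis scaffold : is_scaffold vK vL act p n T b lam Psi.

Local Notation N := (p ^ n)%N.
(* [Psi (n - k)] is the paper's [Psi_i] with [i = n - k]: it acts on digit [k]
   of [a] and shifts valuations by [p^k b_(n-k)]. *)
Local Notation shift k := ((p ^ k)%:Z * b (n - k)%N).

Let p_gt1 : (1 < p)%N := prime_gt1 p_prime.
Let N_gt0 : (0 < N)%N. Proof. by rewrite expn_gt0 prime_gt0. Qed.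

Lemma b_coprime i : (1 <= i <= n)%N -> ~~ (p%:Z %| b i)%Z.
Proof. by case: scaffold => _ + _ _ _; apply. Qed.

Lemma lam_neq0 t : lam t != 0.
Proof. by case: scaffold => _ _ /(_ t) []. Qed.

Lemma dval_lam t : vL (lam t) = t.
Proof. by case: scaffold => _ _ /(_ t) []. Qed.

Lemma lam_ratio t1 t2 : (t1 == t2 %[mod N%:Z])%Z -> exists c : K, lam t1 / lam t2 = c%:A.
Proof. by case: scaffold => _ _ _ /(_ t1 t2). Qed.

(* The scaffold congruence, with the tolerance weakened to [1]. *)
Lemma Psi_lam_congr k t : (k < n)%N -> exists2 u, vunit vK u &
  videal vL (t + shift k + 1) (act (Psi (n - k)) (lam t) -
    if (1 <= digit p (amap p n b t) k)%N then u *: lam (t + shift k) else 0).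
Proof.
move=> hk; have hi : (1 <= n - k <= n)%N by lia.
case: scaffold => hT _ _ _ [_ /(_ _ hi t) [u [hu]]].
rewrite subKn; last exact: ltnW.
move=> H; set m := t + shift k in H *.
exists u => //; case: ifP H => _; case: T hT => [T' hT'|_] /= H.
- by apply: (videalW _ H); lia.
- by rewrite H subrr; left.
- by apply: (videalW _ H); lia.
- by rewrite H subrr; left.
Qed.

Lemma videal_unit_lam u t : vunit vK u -> videal vL t (u *: lam t).
Proof.
by case=> u0 vu; right; have [_ ->] := dvalZ HvL dvalL_scalar u0 (lam_neq0 t); rewrite vu dval_lam; lia.
Qed.

Lemma Psi_lam_videal k t : (k < n)%N -> videal vL (t + shift k) (act (Psi (n - k)) (lam t)).
Proof.
move=> hk; have [u hu H] := Psi_lam_congr t hk.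
rewrite -(subrK (if (1 <= digit p (amap p n b t) k)%N then u *: lam (t + shift k) else 0)
  (act (Psi (n - k)) (lam t))).
apply: (videalD HvL); first by apply: (videalW _ H); lia.
by case: ifP => _; [apply: videal_unit_lam | left].
Qed.

Definition lam_basis := [tuple lam (i : nat)%:Z | i < N].

Lemma lam_family_dist (i j : 'I_N) :
  (N%:Z %| vL (lam (i : nat)%:Z) - vL (lam (j : nat)%:Z))%Z -> i = j.
Proof.
rewrite !dval_lam unfold_in /= => hd; apply/ord_inj/eqP.
have hi := ltn_ord i; have hj := ltn_ord j.
by apply: contraTT hd => ne; rewrite gtnNdvd //; lia.
Qed.

Lemma lam_basis_free : free lam_basis.
Proof.
apply/freeP => c hc; apply: (family_free HvL dvalL_scalar (w := fun i : 'I_N => lam (i : nat)%:Z)).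
- by move=> i; apply: lam_neq0.
- exact: lam_family_dist.
- by rewrite -[RHS]hc; apply: eq_bigr => i _; rewrite nth_mktuple.
Qed.

Lemma lam_basis_span : <<lam_basis>>%VS = fullv.
Proof.
have : basis_of fullv lam_basis by rewrite basisEfree lam_basis_free subvf size_tuple dimL leqnn.
by case/andP => /eqP.
Qed.

Lemma lam_expand x : x = \sum_(i < N) coord lam_basis i x *: lam (i : nat)%:Z.
Proof.
rewrite {1}(coord_span (X := lam_basis) (v := x)) ?lam_basis_span ?memvf //.
by apply: eq_bigr => i _; rewrite nth_mktuple.
Qed.


Lemma videal_lam_coord h x (i : 'I_N) : videal vL h x ->
  coord lam_basis i x = 0 \/ h <= N%:Z * vK (coord lam_basis i x) + (i : nat)%:Z.
Proof.
move=> hx; rewrite -[X in _ <= _ + X](dval_lam (i : nat)%:Z).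
have := family_coord_bound HvL dvalL_scalar lam_neq0 lam_family_dist
  (c := coord lam_basis ^~ x) (h := h).
by rewrite -lam_expand => /(_ hx i).
Qed.

(* The leading term of [x] in the [lam]-basis can be moved onto [lam (vL x)],
   since [lam] indices congruent mod [N] differ by a factor from [K]. *)
Lemma lam_leading x : x != 0 ->
  exists2 u, vunit vK u & videal vL (vL x + 1) (x - u *: lam (vL x)).
Proof.
move=> x0; set c := coord lam_basis ^~ x; set t := vL x.
have ex : x = \sum_(i < N) c i *: lam (i : nat)%:Z := lam_expand x.
have [|i0 [ci0 vi0 rest]] := family_leading HvL dvalL_scalar lam_neq0 lam_family_dist (c := c).
  by rewrite -ex.
rewrite -ex -/t in vi0 rest.
have [_ vci0] := dvalZ HvL dvalL_scalar ci0 (lam_neq0 (i0 : nat)%:Z).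
rewrite vi0 dval_lam in vci0.
have [k hk] : exists k : K, lam (i0 : nat)%:Z / lam t = k%:A.
  apply: lam_ratio; rewrite eqz_mod_dvd.
  rewrite (_ : _ - t = N%:Z * (- vK (c i0))); first exact: dvdz_mulr.
  by rewrite vci0; ring.
have el : lam (i0 : nat)%:Z = k *: lam t by rewrite -mulr_algl -hk mulfVK // lam_neq0.
have u0 : c i0 * k != 0.
  rewrite mulf_neq0 //; apply: contraNneq (lam_neq0 (i0 : nat)%:Z) => k0.
  by rewrite el k0 scale0r.
exists (c i0 * k).
  split=> //; have [_] := dvalZ HvL dvalL_scalar u0 (lam_neq0 t).
  rewrite -scalerA -el vi0 dval_lam -{1}[t]add0r => /addIr /esym /eqP.
  by rewrite mulf_eq0 => /orP [|/eqP //]; move: N_gt0; lia.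
rewrite {1}ex (bigD1 i0) //= el scalerA addrAC subrr add0r.
by elim/big_rec: _ => [|i y ii0 hy]; [left | apply: (videalD HvL) hy; apply: rest].
Qed.

Lemma Psi_videal k h x : (k < n)%N -> videal vL h x ->
  videal vL (h + shift k) (act (Psi (n - k)) x).
Proof.
move=> hk hx; rewrite (lam_expand x) act_sumr //; apply: (videal_sum HvL) => j.
have [c0|bound] := videal_lam_coord j hx; first by rewrite c0 scale0r; left.
have [->|c0] := eqVneq (coord lam_basis j x) 0; first by rewrite scale0r; left.
apply: (videalW _ (videalZ HvL dvalL_scalar c0 (Psi_lam_videal (j : nat)%:Z hk))).
by move: bound; set z := N%:Z * _; lia.
Qed.

Lemma dval_Psi k x : (k < n)%N -> x != 0 -> (1 <= digit p (amap p n b (vL x)) k)%N ->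
  act (Psi (n - k)) x != 0 /\ vL (act (Psi (n - k)) x) = vL x + shift k.
Proof.
move=> hk x0 hd; have [u [u0 vu0] hy] := lam_leading x0.
set t := vL x in hd hy *; set y := x - u *: lam t in hy.
have [u' [u'0 vu'0]] := Psi_lam_congr t hk; rewrite hd.
set m := t + shift k; set e := act _ _ - _ => he.
have uu0 : u * u' != 0 by rewrite mulf_neq0.
have [M0 vM0] := dvalZ HvL dvalL_scalar uu0 (lam_neq0 m).
rewrite (dvalM HvK) // vu0 vu'0 addr0 mulr0 add0r dval_lam in vM0.
have -> : act (Psi (n - k)) x = (u * u') *: lam m + (u *: e + act (Psi (n - k)) y).
  by rewrite -(subrK (u *: lam t) x) -/y actDr // actZr // /e scalerBr scalerA; ring.
have hrest : videal vL (vL ((u * u') *: lam m) + 1) (u *: e + act (Psi (n - k)) y).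
  rewrite vM0; apply: (videalD HvL).
    by have := videalZ HvL dvalL_scalar u0 he; rewrite vu0 mulr0 addr0.
  by have := Psi_videal hk hy; rewrite /m addrAC.
by have [nz ->] := dvalD_eq HvL M0 hrest; rewrite vM0.
Qed.

Lemma Psi_exp_videal k r h x : (k < n)%N -> videal vL h x ->
  videal vL (h + r%:Z * shift k) (act (Psi (n - k) ^+ r) x).
Proof.
move=> hk hx; elim: r => [|r IH]; first by rewrite expr0 act1 // mul0r addr0.
rewrite exprS actM // -addn1 PoszD mulrDl mul1r addrA.
exact: Psi_videal.
Qed.

Lemma dval_Psi_exp k r x : (k < n)%N -> x != 0 ->
  (r <= digit p (amap p n b (vL x)) k)%N ->
  [/\ act (Psi (n - k) ^+ r) x != 0,
      vL (act (Psi (n - k) ^+ r) x) = vL x + r%:Z * shift k &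
      forall j, (j < n)%N -> digit p (amap p n b (vL (act (Psi (n - k) ^+ r) x))) j =
        (digit p (amap p n b (vL x)) j - (j == k) * r)%N].
Proof.
move=> hk x0; elim: r => [|r IH] hr.
  by rewrite expr0 act1 // mul0r addr0; split => // j _; rewrite muln0 subn0.
have [y0 vy hdy] := IH (ltnW hr).
set y := act (Psi (n - k) ^+ r) x in y0 vy hdy *.
have hdk : (1 <= digit p (amap p n b (vL y)) k)%N by rewrite hdy // eqxx; lia.
have [z0 vz] := dval_Psi hk y0 hdk.
rewrite exprS actM // -/y; split => //.
  by rewrite vz vy -addn1 PoszD mulrDl mul1r addrA.
move=> j hj; rewrite vz (digit_amapD p_prime b_coprime hk hdk hj) hdy //.
by case: (j == k); lia.
Qed.

Definition Psi_word (r : seq nat) (d : nat -> nat) : A := \prod_(j <- r) Psi (n - j) ^+ d j.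
Definition shift_word (r : seq nat) (d : nat -> nat) : int := \sum_(j <- r) (d j)%:Z * shift j.

Lemma Psi_word_videal r d h x : (forall j, j \in r -> j < n)%N -> videal vL h x ->
  videal vL (h + shift_word r d) (act (Psi_word r d) x).
Proof.
elim: r h => [|j r IH] h hr hx; first by rewrite /Psi_word /shift_word !big_nil act1 // addr0.
rewrite /Psi_word /shift_word !big_cons actM // addrCA addrC.
apply: Psi_exp_videal; first by apply: hr; rewrite mem_head.
by apply: IH => // i hi; apply: hr; rewrite in_cons hi orbT.
Qed.

Lemma dval_Psi_word r d x : uniq r -> (forall j, j \in r -> j < n)%N ->
  (forall j, j \in r -> d j <= digit p (amap p n b (vL x)) j)%N -> x != 0 ->
  [/\ act (Psi_word r d) x != 0,
      vL (act (Psi_word r d) x) = vL x + shift_word r d &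
      forall j, (j < n)%N -> digit p (amap p n b (vL (act (Psi_word r d) x))) j =
        (digit p (amap p n b (vL x)) j - (j \in r) * d j)%N].
Proof.
elim: r => [|k r IH] /= ur hr hd x0.
  by rewrite /Psi_word /shift_word !big_nil act1 // addr0; split => // j _; rewrite subn0.
have [kr {}ur] := andP ur.
have hk : (k < n)%N by apply: hr; rewrite mem_head.
have [||y0 vy hdy] := IH ur _ _ x0.
- by move=> j hj; apply: hr; rewrite in_cons hj orbT.
- by move=> j hj; apply: hd; rewrite in_cons hj orbT.
set y := act (Psi_word r d) x in y0 vy hdy.
have hdk : (d k <= digit p (amap p n b (vL y)) k)%N.
  by rewrite hdy // (negbTE kr) subn0; apply: hd; rewrite mem_head.
have [z0 vz hdz] := dval_Psi_exp hk y0 hdk.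
rewrite /Psi_word /shift_word big_cons actM // -/(Psi_word r d) -/y; split => //.
  by rewrite vz vy /shift_word big_cons addrA addrAC.
move=> j hj; rewrite hdz // hdy // in_cons.
by have [-> | _] := eqVneq j k; rewrite ?(negbTE kr) /=; lia.
Qed.

Lemma Psi_powE s : Psi_pow p n Psi s = Psi_word (index_iota 0 n) (digit p s).
Proof. by []. Qed.

Lemma bmap_shift_word s : bmap p n b s = shift_word (index_iota 0 n) (digit p s).
Proof.
by rewrite bmapE /bmap_digits /shift_word big_mkord; apply: eq_bigr => j _; rewrite mulrA.
Qed.

Lemma Psi_pow_videal s h x : videal vL h x ->
  videal vL (h + bmap p n b s) (act (Psi_pow p n Psi s) x).
Proof.
move=> hx; rewrite Psi_powE bmap_shift_word.
by apply: Psi_word_videal hx => j; rewrite mem_index_iota.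
Qed.

(* From [a(vL x) = N - 1] every digit is [p - 1], so no digit can be exhausted. *)
Lemma dval_Psi_pow s x : (s < N)%N -> x != 0 -> amap p n b (vL x) = N.-1 ->
  act (Psi_pow p n Psi s) x != 0 /\
  vL (act (Psi_pow p n Psi s) x) = vL x + bmap p n b s.
Proof.
move=> hs x0 hx; rewrite Psi_powE bmap_shift_word.
have [||y0 vy _] := dval_Psi_word (d := digit p s) (iota_uniq 0 (n - 0)) _ _ x0 => // j.
- by rewrite mem_index_iota.
- rewrite mem_index_iota => hj; rewrite hx digit_exp_pred //.
  by have := digit_lt p_gt1 s j; lia.
Qed.

Section Orbit.
Variable rho : L.
Hypotheses (rho_neq0 : rho != 0) (amap_rho : amap p n b (vL rho) = N.-1).

Lemma orbit_dist (i j : 'I_N) :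
  (N%:Z %| vL (act (Psi_pow p n Psi i) rho) - vL (act (Psi_pow p n Psi j) rho))%Z -> i = j.
Proof.
have [_ ->] := dval_Psi_pow (ltn_ord i) rho_neq0 amap_rho.
have [_ ->] := dval_Psi_pow (ltn_ord j) rho_neq0 amap_rho.
rewrite opprD addrACA subrr add0r => /(bmap_inj p_prime b_coprime (ltn_ord i) (ltn_ord j)).
exact: ord_inj.
Qed.

Lemma orbit_free (c : 'I_N -> K) :
  \sum_(i < N) c i *: act (Psi_pow p n Psi i) rho = 0 -> forall i, c i = 0.
Proof.
apply: (family_free HvL dvalL_scalar _ orbit_dist) => i.
by have [] := dval_Psi_pow (ltn_ord i) rho_neq0 amap_rho.
Qed.

Lemma orbit_coord_bound (c : 'I_N -> K) h :
  videal vL h (\sum_(i < N) c i *: act (Psi_pow p n Psi i) rho) ->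
  forall i : 'I_N, c i = 0 \/ h <= N%:Z * vK (c i) + (vL rho + bmap p n b i).
Proof.
move=> hs i; have [_ <-] := dval_Psi_pow (ltn_ord i) rho_neq0 amap_rho.
apply: (family_coord_bound HvL dvalL_scalar _ orbit_dist hs) => j.
by have [] := dval_Psi_pow (ltn_ord j) rho_neq0 amap_rho.
Qed.

End Orbit.

Lemma amap_bmap_last : amap p n b (- bmap p n b N.-1) = N.-1.
Proof. by rewrite (amap_bmap p_prime b_coprime) // ltn_predL. Qed.

Definition Psi_basis := [tuple Psi_pow p n Psi i | i < N].

Lemma Psi_basisE : val Psi_basis = [seq Psi_pow p n Psi s | s <- iota 0 N].
Proof. by rewrite /= -val_enum_ord -map_comp. Qed.

Lemma Psi_basis_is_basis : basis_of fullv Psi_basis.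
Proof.
rewrite basisEfree subvf size_tuple dimA leqnn !andbT.
apply/freeP => c hc; set t := - bmap p n b N.-1.
apply: (orbit_free (lam_neq0 t)); first by rewrite dval_lam amap_bmap_last.
have := congr1 (act^~ (lam t)) hc; rewrite /= act0l // act_suml // => e.
by rewrite -[RHS]e; apply: eq_bigr => i _; rewrite nth_mktuple.
Qed.

Lemma act_Psi_expand a x :
  act a x = \sum_(i < N) coord Psi_basis i a *: act (Psi_pow p n Psi i) x.
Proof.
have /andP [/eqP span _] := Psi_basis_is_basis.
rewrite {1}(coord_span (X := Psi_basis) (v := a)) ?span ?memvf // act_suml //.
by apply: eq_bigr => i _; rewrite nth_mktuple.
Qed.

(* The image of [Psi_basis] under the orbit map is free, hence a basis of [L]. *)
Lemma act_orbit_bijective rho : rho != 0 -> amap p n b (vL rho) = N.-1 ->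
  bijective (act^~ rho).
Proof.
move=> rho0 ha; set W := [tuple act (Psi_pow p n Psi i) rho | i < N].
have W_free : free W.
  apply/freeP => c hc; apply: (orbit_free rho0 ha).
  by rewrite -[RHS]hc; apply: eq_bigr => i _; rewrite nth_mktuple.
have W_span : <<W>>%VS = fullv.
  have : basis_of fullv W by rewrite basisEfree W_free subvf size_tuple dimL leqnn.
  by case/andP => /eqP.
pose g y := \sum_(i < N) coord W i y *: Psi_pow p n Psi i.
have actg y : act (g y) rho = y.
  rewrite /g act_suml // [RHS](coord_span (X := W) (v := y)) ?W_span ?memvf //.
  by apply: eq_bigr => i _; rewrite nth_mktuple.
have act_inj : injective (act^~ rho).
  move=> a a' /= e; apply/eqP; rewrite -subr_eq0; apply/eqP.
  have /(orbit_free rho0 ha) c0 : \sum_(i < N) coord Psi_basis i (a - a') *: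
      act (Psi_pow p n Psi i) rho = 0 by rewrite -act_Psi_expand actBl // e subrr.
  have /andP [/eqP span _] := Psi_basis_is_basis.
  rewrite (coord_span (X := Psi_basis) (v := a - a')) ?span ?memvf //.
  by rewrite big1 // => i _; rewrite c0 scale0r.
by exists g => // a; apply: act_inj; rewrite /= actg.
Qed.

Lemma assoc_order_submod h : vring_submod vK (assoc_order vL act h).
Proof.
split=> [x _ | a a' Sa Sa' x hx | c a hc Sa x hx]; first by rewrite act0l //; left.
  by rewrite actDl //; apply: (videalD HvL); [apply: Sa | apply: Sa'].
by rewrite actZl //; apply: (videalZ_vring HvL dvalL_scalar hc); apply: Sa.
Qed.

(* Test [a] on [lam t], where [t] lies in [P_L^h] and in the residue class of
   [-b(N - 1)], so that the orbit of [lam t] has distinct valuations. *)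
Lemma assoc_order_coord_bound h : exists B : nat -> int,
  forall a, assoc_order vL act h a -> forall i : 'I_N,
    coord Psi_basis i a = 0 \/ - B i <= vK (coord Psi_basis i a).
Proof.
set z := bmap p n b N.-1; set t := - z + N%:Z * ((absz h)%:Z + (absz z)%:Z).
have hN : 1 <= N%:Z by move: N_gt0; lia.
exists (fun i => (absz h)%:Z + (absz t)%:Z + (absz (bmap p n b i))%:Z) => a Sa i.
have ha : amap p n b (vL (lam t)) = N.-1.
  by rewrite dval_lam /t (amapDM p_prime b_coprime) amap_bmap_last.
have ht : videal vL h (lam t) by right; rewrite dval_lam /t; move: hN; nia.
have := Sa _ ht; rewrite act_Psi_expand => /(orbit_coord_bound (lam_neq0 t) ha).
move=> /(_ i) [->|]; [by left | rewrite dval_lam => hc; right].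
move: hc; set c := vK _; set w := bmap p n b i => hc.
have [c0|c0] := leP 0 c; first by lia.
have : N%:Z * c <= c by rewrite -[X in _ <= X]mul1r ler_wnM2r //; lia.
by lia.
Qed.

Lemma assoc_order_Psi_pow_multiple h s :
  exists2 c : K, c != 0 & assoc_order vL act h (c *: Psi_pow p n Psi s).
Proof.
have [_ _ /(_ 1) [pi pi0 vpi]] := HvK.
exists (pi ^+ absz (bmap p n b s)) => [|x hx]; first exact: expf_neq0.
rewrite actZl //.
have := videalZ HvL dvalL_scalar (expf_neq0 (absz (bmap p n b s)) pi0) (Psi_pow_videal s hx).
rewrite (dvalX HvK) // vpi mulr1; apply: videalW.
by move: N_gt0; set w := bmap p n b s; nia.
Qed.

Lemma assoc_order_is_OK_order h : is_OK_order vK (assoc_order vL act h).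
Proof.
have S := assoc_order_submod h; have [S0 SD SZ] := S.
have [B hB] := assoc_order_coord_bound h.
pose f i a := if insub i is Some j then coord Psi_basis (j : 'I_N) a else 0.
have fE (j : 'I_N) a : f j a = coord Psi_basis j a by rewrite /f valK.
have [||||gens Hg] := vring_spanned_of_bounded_coords HvK (f := f) (B := B) (r := N) S.
- by move=> i c a; rewrite /f; case: insub => [j|]; rewrite ?linearZ ?mulr0.
- by move=> i a a'; rewrite /f; case: insub => [j|]; rewrite ?linearD ?addr0.
- by move=> a Sa i hi; rewrite -[i]/(val (Ordinal hi)) fE; apply: hB.
- move=> a _ ha; have /andP [/eqP span _] := Psi_basis_is_basis.
  rewrite (coord_span (X := Psi_basis) (v := a)) ?span ?memvf // big1 // => i _.
  by rewrite -fE ha ?scale0r.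
split=> [x hx | // | // | a a' Sa Sa' x hx |]; first by rewrite act1.
- by rewrite actM //; apply: Sa; apply: Sa'.
split=> //; exists gens; split=> //.
apply/eqP; rewrite eqEsubv subvf /=; have /andP [/eqP <- _] := Psi_basis_is_basis.
apply/span_subvP => _ /tnthP [i ->]; rewrite tnth_mktuple.
have [c c0 Sc] := assoc_order_Psi_pow_multiple h i.
rewrite -(scalerK c0 (Psi_pow p n Psi i)) memvZ //.
have [d [_ ->]] := (Hg _).1 Sc; apply: memv_suml => j _.
by rewrite memvZ // memv_span // mem_nth.
Qed.

End Scaffold.

Theorem proposition2p9
    (p n : nat) (K : fieldType) (L : fieldExtType K) (A : falgType K)
    (vK : K -> int) (vL : L -> int) (act : A -> L -> L)
    (T : option nat) (b : nat -> int) (lam : int -> L) (Psi : nat -> A) :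
    prime p ->
    is_normalized_dval vK -> v_complete vK ->
    videal vK 1 (p%:R : K) ->
    \dim {:L} = (p ^ n)%N ->
    is_normalized_dval vL ->
    (forall c : K, c != 0 -> vL (c%:A) = (p ^ n)%:Z * vK c) ->
    \dim {:A} = (p ^ n)%N ->
    is_Kaction act ->
    is_scaffold vK vL act p n T b lam Psi ->
    [/\ basis_of fullv [seq Psi_pow p n Psi s | s <- iota 0 (p ^ n)],
        (forall (b' : int) (rho : L),
            amap p n b b' = (p ^ n).-1 -> rho != 0 -> vL rho = b' ->
            bijective (fun alpha : A => act alpha rho)) &
        (forall h : int, is_OK_order vK (assoc_order vL act h))].
Proof.
move=> p_prime HvK _ _ dimL HvL dvalL_scalar dimA Hact scaffold; split.
- rewrite -Psi_basisE.
  exact: Psi_basis_is_basis p_prime HvK HvL dimL dvalL_scalar dimA Hact scaffold.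
- move=> b' rho ha rho0 vrho; rewrite -vrho in ha.
  exact: act_orbit_bijective p_prime HvK HvL dimL dvalL_scalar dimA Hact scaffold rho rho0 ha.
- exact: assoc_order_is_OK_order p_prime HvK HvL dimL dvalL_scalar dimA Hact scaffold.
Qed.
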